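(* The complement $\mathbb{R}^3\setminus(\mathcal{C}\cup Son\cup Son')$ has exactly twelve connected components (six in the half-space $Y>0$ and six in the half-space $Y<0$, the two collections being exchanged by the reflection $(z,\tau,Y)\mapsto(z,\tau,-Y)$).
   Context: Fix $b_1>1$ and $c>0$. In $\mathbb{R}^3$ with coordinates $(z,\tau,Y)$, let $\mathcal{C}=\{Y=0\}$, let the sonic surface $Son$ be the zero set of $c\,z[(b_1+1)z^2+3]\tau+[(b_1+1)z^2-1]\frac{Y}{2}+\frac{c[(b_1-1)z^2+1]}{z^2+1}$, and let the sonic$'$ surface $Son'$ be the zero set of $c\,z[(b_1+1)z^2+3]\tau-[(b_1+1)z^2-1]\frac{Y}{2}+\frac{c[(b_1-1)z^2+1]}{z^2+1}$. *)

From HB Require Import structures.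
From mathcomp Require Import all_boot all_order all_algebra.
From mathcomp Require Import all_classical all_reals all_analysis.
Set Implicit Arguments. Unset Strict Implicit. Unset Printing Implicit Defensive.
Import Order.TTheory GRing.Theory Num.Theory.
Import numFieldTopology.Exports numFieldNormedType.Exports.
Local Open Scope classical_set_scope.
Local Open Scope ring_scope.

(* Points of R^3 with coordinates (z, tau, Y) are represented as ((z, tau), Y). *)
Notation pt R := (R * R * R)%type.

Definition zc (R : realType) (p : pt R) : R := p.1.1.
Definition tauc (R : realType) (p : pt R) : R := p.1.2.
Definition Yc (R : realType) (p : pt R) : R := p.2.

Definition Cset (R : realType) : set (pt R) := [set p | Yc p = 0].

Definition son_fun (R : realType) (b1 c : R) (p : pt R) : R :=
  let z := zc p in
  c * z * ((b1 + 1) * z ^+ 2 + 3) * tauc p + ((b1 + 1) * z ^+ 2 - 1) * (Yc p / 2)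
  + c * ((b1 - 1) * z ^+ 2 + 1) / (z ^+ 2 + 1).

Definition son'_fun (R : realType) (b1 c : R) (p : pt R) : R :=
  let z := zc p in
  c * z * ((b1 + 1) * z ^+ 2 + 3) * tauc p - ((b1 + 1) * z ^+ 2 - 1) * (Yc p / 2)
  + c * ((b1 - 1) * z ^+ 2 + 1) / (z ^+ 2 + 1).

Definition Son (R : realType) (b1 c : R) : set (pt R) := [set p | son_fun b1 c p = 0].
Definition Son' (R : realType) (b1 c : R) : set (pt R) := [set p | son'_fun b1 c p = 0].

Definition Omega (R : realType) (b1 c : R) : set (pt R) :=
  ~` (@Cset R `|` Son b1 c `|` Son' b1 c).

Definition components (R : realType) (b1 c : R) : set (set (pt R)) :=
  connected_component (Omega b1 c) @` (Omega b1 c).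

Definition reflY (R : realType) (p : pt R) : pt R := (p.1, - p.2).

From HB Require Import structures.
From mathcomp Require Import all_boot all_order all_algebra.
From mathcomp Require Import all_classical all_reals all_analysis.
From mathcomp Require Import ring lra zify.
Import Order.TTheory GRing.Theory Num.Theory.
Import numFieldTopology.Exports numFieldNormedType.Exports.
Set Implicit Arguments. Unset Strict Implicit. Unset Printing Implicit Defensive.
Local Open Scope classical_set_scope.
Local Open Scope ring_scope.

(* The reflection (z, tau, Y) |-> (z, tau, -Y) swaps Son and Son' and exchanges
   the two half-spaces, so it suffices to count components in Y > 0.  For fixed
   z both sonic functions are affine in (tau, Y), hence a region of constant
   signs of Y, son and son' is convex in every plane z = const; it is then
   connected as soon as it has a continuous section over an interval of z's,
   and such sections are written down explicitly.  On the line z = 0 the sonic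
   function [son'] is positive when Y > 0, so the two sign patterns with
   son' < 0 avoid z = 0 and split according to the sign of z: this gives
   2 + 2 * 2 = 6 components in each half-space. *)

Lemma pair_continuous (T U V : topologicalType) (f : T -> U) (g : T -> V) x :
  {for x, continuous f} -> {for x, continuous g} -> {for x, continuous (fun y => (f y, g y))}.
Proof. by move=> ? ?; rewrite /continuous_at; exact: cvg_pair. Qed.

Lemma connected_through (T : topologicalType) (A S : set T) :
  connected A -> A `<=` S ->
  (forall p, S p -> exists2 C, connected C /\ C `<=` S & C p /\ C `&` A !=set0) ->
  connected S.
Proof.
move=> cA AS joinS.
have [A0|/set0P[a Aa]] := eqVneq A set0.
  suff -> : S = set0 by exact: connected0.
  by apply/seteqP; split=> // p /joinS[C _ [_ [q []]]]; rewrite A0.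
pose links := [set C | [/\ connected C, C `<=` S & C `&` A !=set0]].
have -> : S = \bigcup_(C in links) (C `|` A).
  apply/seteqP; split=> [p /joinS[C [cC CS] [Cp CA]]|p [C [_ CS _]] [/CS|/AS]] //.
  by exists C => //; left.
apply: bigcup_connected; first by exists a => C _; right.
by move=> C [cC _ CA]; apply: connectedU.
Qed.

Section connectedness.
Context {R : realType}.

Lemma connected_sign_constant (T : topologicalType) (S : set T) (f : T -> R) :
  connected S -> {within S, continuous f} -> (forall x, S x -> f x != 0) ->
  forall x y, S x -> S y -> (0 < f x) = (0 < f y).
Proof.
move=> cS cf f_neq0.
have itv : is_interval (f @` S) by exact/connected_intervalP/connected_continuous_connected.
have sign_change x y : S x -> S y -> 0 < f x -> f y <= 0 -> False.
  move=> Sx Sy fx_gt0 fy_le0.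
  have [r Sr fr0] : (f @` S) 0 by apply: (itv (f y) (f x)); [exists y|exists x|rewrite fy_le0 ltW].
  by move: (f_neq0 r Sr); rewrite fr0 eqxx.
move=> x y Sx Sy; have [fx|fx] := ltP 0 (f x); have [fy|fy] := ltP 0 (f y) => //.
- by case: (sign_change x y).
- by case: (sign_change y x).
Qed.

Lemma convex_connected (V : normedModType R) (S : set V) :
  (forall a b t, S a -> S b -> 0 <= t <= 1 -> S ((1 - t) *: a + t *: b)) ->
  connected S.
Proof.
move=> convS; have [->|/set0P[a Sa]] := eqVneq S set0; first exact: connected0.
pose seg b t := (1 - t) *: a + t *: b.
have -> : S = \bigcup_(b in S) (seg b @` `[0, 1]).
  apply/seteqP; split=> [b Sb|_ [b Sb [t + <-]]].
    exists b => //; exists 1; first by rewrite /= in_itv/= lexx ler01.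
    by rewrite /seg subrr scale0r add0r scale1r.
  by rewrite /= in_itv/= => t01; exact: convS.
apply: bigcup_connected.
  exists a => b Sb; exists 0; first by rewrite /= in_itv/= lexx ler01.
  by rewrite /seg subr0 scale1r scale0r addr0.
move=> b _; apply: connected_continuous_connected; first exact: segment_connected.
apply: continuous_subspaceT => t; apply: cvgD; apply: cvgZr_tmp => //.
by apply: cvgB => //; exact: cvg_cst.
Qed.
End connectedness.

Definition has_sign {R : realDomainType} (b : bool) (x : R) : Prop :=
  if b then 0 < x else x < 0.

Lemma has_signP {R : realDomainType} b (x : R) :
  has_sign b x <-> x != 0 /\ (0 < x) = b.
Proof.
case: b; rewrite /has_sign; first by split=> [x_gt0|[]//]; rewrite gt_eqF.
split=> [x_lt0|[x_neq0 /negbT]]; first by rewrite lt_eqF // ltNge ltW.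
by rewrite -leNgt le_eqVlt (negbTE x_neq0).
Qed.

Lemma has_sign_unit {R : realDomainType} w : has_sign w (if w then 1 else -1 : R).
Proof. by case: w; rewrite /has_sign ?ltrN10. Qed.

Lemma has_sign_convex {R : realFieldType} b (x y t : R) : 0 <= t <= 1 ->
  has_sign b x -> has_sign b y -> has_sign b ((1 - t) * x + t * y).
Proof. by case/andP=> t_ge0 t_le1; rewrite /has_sign; case: b => x_sgn y_sgn; nra. Qed.

Lemma has_signMl {R : realDomainType} b (k x : R) :
  0 < k -> has_sign b x -> has_sign b (k * x).
Proof. by case: b => k_gt0 /=; rewrite /has_sign ?pmulr_rgt0 ?pmulr_rlt0. Qed.

Lemma has_sign_at_ratio {R : realFieldType} b (X D u : R) : 0 < D -> 0 < u ->
  has_sign b (2 * u + X) -> has_sign b (X * (D / u / 2) + D).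
Proof.
move=> D_gt0 u_gt0; have -> : X * (D / u / 2) + D = D / (2 * u) * (2 * u + X).
  by field; rewrite gt_eqF.
by apply: has_signMl; rewrite divr_gt0 ?mulr_gt0.
Qed.

Lemma sqr_add1_gt0 {R : realDomainType} (z : R) : 0 < z ^+ 2 + 1.
Proof. by rewrite ltr_pwDr ?sqr_ge0. Qed.

Lemma convex_id {R : pzRingType} (x t : R) : (1 - t) * x + t * x = x.
Proof. by rewrite -mulrDl subrK mul1r. Qed.

Lemma neq0_oppr_gt0 {R : realDomainType} (x : R) : x != 0 -> (0 < - x) = ~~ (0 < x).
Proof. by move=> x_neq0; rewrite oppr_gt0 ltNge le_eqVlt eq_sym (negbTE x_neq0). Qed.

Lemma sqr_le_between {R : realDomainType} (x m y : R) :
  x <= m <= y -> m ^+ 2 <= x ^+ 2 \/ m ^+ 2 <= y ^+ 2.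
Proof. by case/andP=> xm my; have [m_ge0|m_lt0] := leP 0 m; [right|left]; nra. Qed.

Definition half_label (inner outer w : bool) : nat :=
  if outer then (if inner then 0 else 1)
  else if inner then (if w then 2 else 3) else (if w then 4 else 5).

Definition half_offset (e : bool) : nat := if e then 0 else 6.

Definition sign_label (e inner outer w : bool) : nat :=
  (half_offset e + half_label inner outer w)%N.

Definition flip_half (i : nat) : nat := if (i < 6)%N then (6 + i)%N else (i - 6)%N.

Lemma sign_label_lt12 e i o w : (sign_label e i o w < 12)%N.
Proof. by case: e i o w => [] [] [] []. Qed.

Lemma sign_label_lt6 e i o w : (sign_label e i o w < 6)%N = e.
Proof. by case: e i o w => [] [] [] []. Qed.

Lemma sign_label_inj e i o w e' i' o' w' :
  sign_label e i o w = sign_label e' i' o' w' -> [/\ e = e', i = i' & o = o'].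
Proof. by case: e i o w e' i' o' w' => [] [] [] [] [] [] [] []. Qed.

Lemma sign_label_inj_w e i w w' :
  sign_label e i false w = sign_label e i false w' -> w = w'.
Proof. by case: e i w w' => [] [] [] []. Qed.

Lemma sign_label_flip e i o w : sign_label (~~ e) i o w = flip_half (sign_label e i o w).
Proof. by case: e i o w => [] [] [] []. Qed.

Lemma half_offset_lt6 e (k : 'I_6) : (half_offset e + k < 6)%N = e.
Proof. by have := ltn_ord k; case: e; rewrite /half_offset; lia. Qed.

Lemma half_offset_lt12 e (k : 'I_6) : (half_offset e + k < 12)%N.
Proof. by have := ltn_ord k; case: e; rewrite /half_offset; lia. Qed.

Lemma half_offsetP e i : (i < 12)%N -> (i < 6)%N = e ->
  exists k : 'I_6, (half_offset e + k)%N = i.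
Proof.
move=> i_lt12 <-; have [i_lt6|i_ge6] := ltnP i 6; first by exists (Ordinal i_lt6).
have j_lt6 : (i - 6 < 6)%N by lia.
by exists (Ordinal j_lt6); rewrite /half_offset /=; lia.
Qed.

Lemma flip_halfK i : (i < 12)%N -> flip_half (flip_half i) = i.
Proof. by do 12?[case: i => [|i] //]. Qed.

Section coordinates.
Variable R : realType.

Lemma zc_continuous : continuous (@zc R).
Proof. by move=> p; apply: cvg_comp; exact: cvg_fst. Qed.

Lemma tauc_continuous : continuous (@tauc R).
Proof. by move=> p; apply: cvg_comp; [exact: cvg_fst|exact: cvg_snd]. Qed.

Lemma Yc_continuous : continuous (@Yc R).
Proof. by move=> p; exact: cvg_snd. Qed.

Lemma reflY_continuous : continuous (@reflY R).
Proof.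
move=> p; rewrite /reflY; apply: pair_continuous; first exact: cvg_fst.
by apply: cvgN; exact: cvg_snd.
Qed.

Lemma zc_convex (a b : pt R) t : zc ((1 - t) *: a + t *: b) = (1 - t) * zc a + t * zc b.
Proof. by []. Qed.

Lemma tauc_convex (a b : pt R) t : tauc ((1 - t) *: a + t *: b) = (1 - t) * tauc a + t * tauc b.
Proof. by []. Qed.

Lemma Yc_convex (a b : pt R) t : Yc ((1 - t) *: a + t *: b) = (1 - t) * Yc a + t * Yc b.
Proof. by []. Qed.

End coordinates.

Ltac continuity :=
  try unfold prop_for, continuous_at; cbv beta;
  repeat lazymatch goal with
  | |- cvg_to (nbhs (fmap (fun _ => ?k) _)) _ => exact: cvg_cst
  | |- cvg_to (nbhs (fmap (fun x => x) _)) _ => exact: cvg_id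
  | |- cvg_to (nbhs (fmap (fun x => zc x) _)) _ => exact: zc_continuous
  | |- cvg_to (nbhs (fmap (fun x => tauc x) _)) _ => exact: tauc_continuous
  | |- cvg_to (nbhs (fmap (fun x => Yc x) _)) _ => exact: Yc_continuous
  | |- cvg_to (nbhs (fmap (fun x => @?f x + @?g x) _)) _ => apply: (cvgD (f := f) (g := g))
  | |- cvg_to (nbhs (fmap (fun x => - @?f x) _)) _ => apply: (cvgN (f := f))
  | |- cvg_to (nbhs (fmap (fun x => @?f x * @?g x) _)) _ => apply: (cvgM (f := f) (g := g))
  | |- cvg_to (nbhs (fmap (fun x => @?f x ^+ 2) _)) _ => apply: (cvgM (f := f) (g := f))
  | |- cvg_to (nbhs (fmap (fun x => (@?f x)^-1) _)) _ => apply: (cvgV (f := f))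
  end.

Section sonic.
Variables (R : realType) (b1 c : R).
Hypotheses (hb1 : 1 < b1) (hc : 0 < c).

Local Notation son := (son_fun b1 c).
Local Notation son' := (son'_fun b1 c).
Local Notation Omega := (Omega b1 c).

Definition coefA (z : R) := c * z * ((b1 + 1) * z ^+ 2 + 3).
Definition coefB (z : R) := (b1 + 1) * z ^+ 2 - 1.
Definition coefD (z : R) := c * ((b1 - 1) * z ^+ 2 + 1) / (z ^+ 2 + 1).

Lemma son_funE p :
  son p = coefA (zc p) * tauc p + coefB (zc p) * (Yc p / 2) + coefD (zc p).
Proof. by []. Qed.

Lemma son'_funE p :
  son' p = coefA (zc p) * tauc p - coefB (zc p) * (Yc p / 2) + coefD (zc p).
Proof. by []. Qed.

Lemma coefD_gt0 z : 0 < coefD z.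
Proof.
apply: divr_gt0 (sqr_add1_gt0 z); apply: mulr_gt0 => //.
by rewrite ltr_wpDl // mulr_ge0 ?sqr_ge0 // subr_ge0 ltW.
Qed.

Lemma coefA_eq0 z : (coefA z == 0) = (z == 0).
Proof.
have : 0 < (b1 + 1) * z ^+ 2 + 3 by have := sqr_ge0 z; have := hb1; nra.
by rewrite /coefA !mulf_eq0 (gt_eqF hc) => /gt_eqF ->; rewrite orbF.
Qed.

Lemma son_reflY p : son (reflY p) = son' p.
Proof. by rewrite /son_fun /reflY /= mulNr mulrN. Qed.

Lemma son_continuous : continuous son.
Proof. by move=> p; rewrite /son_fun; continuity; exact: lt0r_neq0 (sqr_add1_gt0 _). Qed.

Lemma son'_continuous : continuous son'.
Proof.
have -> : son' = son \o @reflY R by apply/funext => p; rewrite /= son_reflY.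
by move=> p; apply: continuous_comp; [exact: reflY_continuous|exact: son_continuous].
Qed.

Lemma son'_reflY p : son' (reflY p) = son p.
Proof. by rewrite -son_reflY /reflY /= opprK; case: p. Qed.

Lemma son_sub_son' p : son p - son' p = coefB (zc p) * Yc p.
Proof. by rewrite son_funE son'_funE; field. Qed.

Lemma son_convex a b t : zc a = zc b ->
  son ((1 - t) *: a + t *: b) = (1 - t) * son a + t * son b.
Proof.
move=> ezab; rewrite !son_funE zc_convex tauc_convex Yc_convex -ezab convex_id.
by field.
Qed.

Lemma son'_convex a b t : zc a = zc b ->
  son' ((1 - t) *: a + t *: b) = (1 - t) * son' a + t * son' b.
Proof.
move=> ezab; rewrite !son'_funE zc_convex tauc_convex Yc_convex -ezab convex_id.
by field.
Qed.

Lemma OmegaP p : Omega p <-> [/\ Yc p != 0, son p != 0 & son' p != 0].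
Proof.
rewrite /Omega /Cset /Son /Son' /=; split.
  by move=> Op; split; apply/eqP => E; apply: Op; [left; left|left; right|right].
by case=> /eqP ? /eqP ? /eqP ? [[]|].
Qed.

Lemma Omega_reflY p : Omega (reflY p) <-> Omega p.
Proof. by rewrite !OmegaP son_reflY son'_reflY /Yc /= oppr_eq0; split; case. Qed.

Lemma coef_at0 : [/\ coefA 0 = 0, coefB 0 = -1 & coefD 0 = c].
Proof. by rewrite /coefA /coefB /coefD expr0n /= !(mulr0, mul0r, add0r, addr0, mulr1, invr1). Qed.

(* In the half-space of [p], [outer_son] is the sonic function that is positive
   on the line z = 0 (see [outer_son_gt0_z0]). *)
Definition inner_son p := if 0 < Yc p then son p else son' p.
Definition outer_son p := if 0 < Yc p then son' p else son p.

Definition label p :=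
  sign_label (0 < Yc p) (0 < inner_son p) (0 < outer_son p) (0 < zc p).

Definition region (i : nat) : set (pt R) := [set p | Omega p /\ label p = i].

Lemma outer_son_gt0_z0 p : Yc p != 0 -> zc p = 0 -> 0 < outer_son p.
Proof.
case: coef_at0 => A0 B0 D0 Y_neq0 z0.
rewrite /outer_son son_funE son'_funE z0 A0 B0 D0 mul0r add0r.
by case: (ltrgtP (Yc p) 0) Y_neq0 => // Y_sign _; have := hc; lra.
Qed.

Lemma inner_son_reflY p : Yc p != 0 -> inner_son (reflY p) = inner_son p.
Proof.
move=> Y_neq0; rewrite /inner_son son_reflY son'_reflY {1}/Yc /= neq0_oppr_gt0 //.
by rewrite if_neg.
Qed.

Lemma outer_son_reflY p : Yc p != 0 -> outer_son (reflY p) = outer_son p.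
Proof.
move=> Y_neq0; rewrite /outer_son son_reflY son'_reflY {1}/Yc /= neq0_oppr_gt0 //.
by rewrite if_neg.
Qed.

Lemma label_reflY p : Yc p != 0 -> label (reflY p) = flip_half (label p).
Proof.
move=> Y_neq0; rewrite /label inner_son_reflY // outer_son_reflY // -sign_label_flip.
by rewrite {1}/Yc /= neq0_oppr_gt0.
Qed.

Lemma label_lt12 p : (label p < 12)%N.
Proof. exact: sign_label_lt12. Qed.

Lemma label_lt6 p : (label p < 6)%N = (0 < Yc p).
Proof. exact: sign_label_lt6. Qed.

Lemma region_reflY i : (i < 12)%N -> @reflY R @` region i = region (flip_half i).
Proof.
move=> i_lt12; apply/seteqP; split=> [_ [p [Op <-] <-]|q [Oq lq]].
  by split; [exact/Omega_reflY|rewrite label_reflY //; case/OmegaP: Op].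
have /OmegaP[Y_neq0 _ _] := Oq.
exists (reflY q); last by case: q {Oq lq Y_neq0} => -[] ? ? ?; rewrite /reflY /= opprK.
by split; [exact/Omega_reflY|rewrite label_reflY // lq flip_halfK].
Qed.

Lemma label_eq_of_signs p q :
  (0 < Yc p) = (0 < Yc q) -> (0 < son p) = (0 < son q) ->
  (0 < son' p) = (0 < son' q) -> (0 < zc p) = (0 < zc q) -> label p = label q.
Proof.
move=> eY eS eS' ez; rewrite /label /inner_son /outer_son eY ez.
by case: ifP => _; rewrite eS eS'.
Qed.

Lemma signs_of_label p q : label p = label q ->
  [/\ (0 < Yc p) = (0 < Yc q), (0 < son p) = (0 < son q) & (0 < son' p) = (0 < son' q)].
Proof.
case/sign_label_inj => eY; rewrite /inner_son /outer_son eY.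
by case: ifP => _ eI eO.
Qed.

Lemma region_fiber_convex i a b t : region i a -> region i b -> zc a = zc b ->
  0 <= t <= 1 -> region i ((1 - t) *: a + t *: b).
Proof.
move=> [Oa la] [Ob lb] ezab t01.
have [eY eS eS'] := signs_of_label (etrans la (esym lb)).
have /OmegaP[Ya Sa S'a] := Oa; have /OmegaP[Yb Sb S'b] := Ob.
have conv_sign (x y : R) : x != 0 -> y != 0 -> (0 < x) = (0 < y) ->
    (1 - t) * x + t * y != 0 /\ (0 < (1 - t) * x + t * y) = (0 < x).
  move=> x_neq0 y_neq0 exy; apply/has_signP/has_sign_convex => //; apply/has_signP => //.
have [Ym eYm] := conv_sign _ _ Ya Yb eY.
have [Sm eSm] := conv_sign _ _ Sa Sb eS.
have [S'm eS'm] := conv_sign _ _ S'a S'b eS'.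
split; first by apply/OmegaP; rewrite Yc_convex son_convex // son'_convex.
rewrite -la; apply: label_eq_of_signs; rewrite ?Yc_convex ?son_convex ?son'_convex //.
by rewrite zc_convex -ezab convex_id.
Qed.

Lemma connected_region_of_section i (J : set R) (tau Y : R -> R) :
  is_interval J -> J !=set0 ->
  (forall z, J z -> {for z, continuous tau}) -> (forall z, J z -> {for z, continuous Y}) ->
  (forall z, J z -> region i ((z, tau z), Y z)) -> (forall p, region i p -> J (zc p)) ->
  connected (region i) /\ region i !=set0.
Proof.
move=> iJ [z0 Jz0] tau_cont Y_cont sec_in zc_in; pose sec z := ((z, tau z), Y z).
split; last by exists (sec z0); exact: sec_in.
apply: (@connected_through _ (sec @` J)).
- apply: connected_continuous_connected; first exact/connected_intervalP.
  apply: continuous_in_subspaceT => z; rewrite in_setE => Jz.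
  by apply: pair_continuous; [apply: pair_continuous; [exact: cvg_id|exact: tau_cont]|exact: Y_cont].
- by move=> _ [z Jz <-]; exact: sec_in.
move=> p ip; exists (region i `&` [set q | zc q = zc p]).
  split; last by move=> q [].
  apply: convex_connected => a b t [ia za] [ib zb] t01; split.
    exact: region_fiber_convex ia ib (etrans za (esym zb)) t01.
  by rewrite /= zc_convex za zb convex_id.
split=> //; exists (sec (zc p)); split; first by split=> //; exact/sec_in/zc_in.
by exists (zc p) => //; exact: zc_in.
Qed.

Lemma mem_upper_region inner outer w p :
  0 < Yc p -> has_sign inner (son p) -> has_sign outer (son' p) -> (0 < zc p) = w ->
  region (sign_label true inner outer w) p.
Proof.
move=> Y_gt0 /has_signP[S_neq0 eS] /has_signP[S'_neq0 eS'] ez.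
split; first by apply/OmegaP; rewrite gt_eqF.
by rewrite /label /inner_son /outer_son Y_gt0 eS eS' ez.
Qed.

Lemma upper_region_signs inner outer w p : region (sign_label true inner outer w) p ->
  [/\ 0 < Yc p, has_sign inner (son p), has_sign outer (son' p)
    & ~~ outer -> has_sign w (zc p)].
Proof.
move=> [Op lp]; have /OmegaP[Y_neq0 S_neq0 S'_neq0] := Op.
have [Y_gt0 eI eO] := sign_label_inj lp.
have eS : (0 < son p) = inner by rewrite -eI /inner_son Y_gt0.
have eS' : (0 < son' p) = outer by rewrite -eO /outer_son Y_gt0.
split=> //; try exact/has_signP.
move=> /negbTE outer_neg; apply/has_signP; split.
  apply/eqP => z0; have := outer_son_gt0_z0 Y_neq0 z0.
  by rewrite /outer_son Y_gt0 eS' outer_neg.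
by move: lp; rewrite /label Y_gt0 eI eO outer_neg => /sign_label_inj_w.
Qed.

Lemma coefB_le z z' : z ^+ 2 <= z' ^+ 2 -> coefB z <= coefB z'.
Proof. by move=> sq_le; rewrite /coefB lerD2r ler_wpM2l //; have := hb1; lra. Qed.

Lemma son_at_tau0 z Y : son ((z, 0), Y) = coefB z * (Y / 2) + coefD z.
Proof. by rewrite son_funE mulr0 add0r. Qed.

Lemma son'_at_tau0 z Y : son' ((z, 0), Y) = - coefB z * (Y / 2) + coefD z.
Proof. by rewrite son'_funE mulr0 sub0r mulNr. Qed.

Lemma connected_region_pp : connected (region 0) /\ region 0 !=set0.
Proof.
have u_gt0 z : 0 < 1 + coefB z ^+ 2 by rewrite ltr_pwDl ?sqr_ge0.
apply: (@connected_region_of_section _ setT (fun=> 0) (fun z => coefD z / (1 + coefB z ^+ 2))).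
- by [].
- by exists 0.
- by move=> z _; exact: cst_continuous.
- move=> z _; rewrite /coefD /coefB; continuity; apply: lt0r_neq0.
    exact: sqr_add1_gt0.
  by move: (u_gt0 z).
- move=> z _; apply: (@mem_upper_region true true (0 < z)) => //.
  + by rewrite divr_gt0 ?coefD_gt0.
  + rewrite son_at_tau0; apply: has_sign_at_ratio (coefD_gt0 z) (u_gt0 z) _.
    by rewrite /has_sign; have := sqr_ge0 (4 * coefB z + 1); nra.
  + rewrite son'_at_tau0; apply: has_sign_at_ratio (coefD_gt0 z) (u_gt0 z) _.
    by rewrite /has_sign; have := sqr_ge0 (4 * coefB z - 1); nra.
- by [].
Qed.

Lemma connected_region_np : connected (region 1) /\ region 1 !=set0.
Proof.
have u_gt0 z : coefB z < 0 -> 0 < - coefB z / 4 by move=> ?; rewrite divr_gt0 ?oppr_gt0.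
apply: (@connected_region_of_section _ [set z | coefB z < 0] (fun=> 0)
                                       (fun z => coefD z / (- coefB z / 4))).
- move=> x y /= Bx By m xmy.
  by case: (sqr_le_between xmy) => /coefB_le; lra.
- by exists 0 => /=; case: coef_at0 => _ -> _; rewrite ltrN10.
- by move=> z _; exact: cst_continuous.
- move=> z /= B_lt0; rewrite /coefD /coefB; continuity; apply: lt0r_neq0.
    exact: sqr_add1_gt0.
  by move: (u_gt0 z B_lt0).
- move=> z /= B_lt0; apply: (@mem_upper_region false true (0 < z)) => //.
  + by rewrite divr_gt0 ?coefD_gt0 ?u_gt0.
  + rewrite son_at_tau0; apply: has_sign_at_ratio (coefD_gt0 z) (u_gt0 z B_lt0) _.
    by rewrite /has_sign; lra.
  + rewrite son'_at_tau0; apply: has_sign_at_ratio (coefD_gt0 z) (u_gt0 z B_lt0) _.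
    by rewrite /has_sign; lra.
- move=> p /(@upper_region_signs false true true)[Y_gt0 S_lt0 S'_gt0 _] /=.
  by have := son_sub_son' p; rewrite /has_sign in S_lt0 S'_gt0; nra.
Qed.

Lemma connected_region_pn w :
  connected (region (sign_label true true false w)) /\
  region (sign_label true true false w) !=set0.
Proof.
have u_gt0 z : 0 < coefB z -> 0 < coefB z / 4 by move=> ?; rewrite divr_gt0.
apply: (@connected_region_of_section _ [set z | has_sign w z /\ 0 < coefB z] (fun=> 0)
                                       (fun z => coefD z / (coefB z / 4))).
- move=> x y /= [x_sgn Bx] [y_sgn By] m /andP[xm my].
  rewrite /has_sign in x_sgn y_sgn *; case: w x_sgn y_sgn => x_sgn y_sgn; split; try lra.
    by apply: lt_le_trans Bx (coefB_le _); nra.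
  by apply: lt_le_trans By (coefB_le _); nra.
- exists (if w then 1 else -1); split; first exact: has_sign_unit.
  by rewrite /coefB; case: w; rewrite ?sqrrN expr1n mulr1 addrK; have := hb1; lra.
- by move=> z _; exact: cst_continuous.
- move=> z /= [_ B_gt0]; rewrite /coefD /coefB; continuity; apply: lt0r_neq0.
    exact: sqr_add1_gt0.
  by move: (u_gt0 z B_gt0).
- move=> z /= [/has_signP[_ z_sgn] B_gt0]; apply: mem_upper_region => //.
  + by rewrite divr_gt0 ?coefD_gt0 ?u_gt0.
  + rewrite son_at_tau0; apply: has_sign_at_ratio (coefD_gt0 z) (u_gt0 z B_gt0) _.
    by rewrite /has_sign; lra.
  + rewrite son'_at_tau0; apply: has_sign_at_ratio (coefD_gt0 z) (u_gt0 z B_gt0) _.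
    by rewrite /has_sign; lra.
- move=> p /upper_region_signs[Y_gt0 S_gt0 S'_lt0 /(_ isT) z_sgn] /=; split=> //.
  by have := son_sub_son' p; rewrite /has_sign in S_gt0 S'_lt0; nra.
Qed.

Lemma connected_region_nn w :
  connected (region (sign_label true false false w)) /\
  region (sign_label true false false w) !=set0.
Proof.
have A_neq0 z : has_sign w z -> coefA z != 0.
  by case/has_signP; rewrite coefA_eq0.
apply: (@connected_region_of_section _ (has_sign w)
          (fun z => - (coefD z + 1 + coefB z ^+ 2) / coefA z) (fun=> 1)).
- move=> x y /= x_sgn y_sgn m /andP[xm my]; rewrite /has_sign in x_sgn y_sgn *.
  by case: w {A_neq0} x_sgn y_sgn; lra.
- by exists (if w then 1 else -1); exact: has_sign_unit.
- move=> z z_sgn; rewrite /coefD /coefB; continuity.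
  + exact: lt0r_neq0 (sqr_add1_gt0 z).
  + exact: A_neq0.
  + by rewrite /coefA; continuity.
- by move=> z _; exact: cst_continuous.
- move=> z z_sgn; apply: mem_upper_region; [exact: ltr01| | |by case/has_signP: z_sgn].
  + rewrite son_funE /zc /tauc /Yc /= mulrC divfK ?A_neq0 //.
    by rewrite /has_sign; have := sqr_ge0 (4 * coefB z - 1); nra.
  + rewrite son'_funE /zc /tauc /Yc /= mulrC divfK ?A_neq0 //.
    by rewrite /has_sign; have := sqr_ge0 (4 * coefB z + 1); nra.
- by move=> p /upper_region_signs[_ _ _ /(_ isT)].
Qed.

Lemma connected_region_upper i : (i < 6)%N -> connected (region i) /\ region i !=set0.
Proof.
case: i => [_|[_|[_|[_|[_|[_|//]]]]]].
- exact: connected_region_pp.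
- exact: connected_region_np.
- exact: (connected_region_pn true).
- exact: (connected_region_pn false).
- exact: (connected_region_nn true).
- exact: (connected_region_nn false).
Qed.

Lemma connected_region i : (i < 12)%N -> connected (region i) /\ region i !=set0.
Proof.
move=> i_lt12; have [/connected_region_upper //|i_ge6] := ltnP i 6.
have j_lt6 : (flip_half i < 6)%N by rewrite /flip_half [(i < 6)%N]ltnNge i_ge6 ltn_subLR.
have [conn [p rp]] := connected_region_upper j_lt6.
rewrite -(flip_halfK i_lt12) -region_reflY ?(ltn_trans j_lt6) //.
split; last by exists (reflY p); exists p.
by apply: connected_continuous_connected conn _; exact/continuous_subspaceT/reflY_continuous.
Qed.

Lemma label_constant (S : set (pt R)) : connected S -> S `<=` Omega ->
  forall p q, S p -> S q -> label p = label q.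
Proof.
move=> cS SO.
have sign_const (f : pt R -> R) : continuous f -> (forall r, S r -> f r != 0) ->
    forall r q, S r -> S q -> (0 < f r) = (0 < f q).
  by move=> cf; apply: connected_sign_constant cS (continuous_subspaceT cf).
have [Y_neq0 S_neq0 S'_neq0] : [/\ forall r, S r -> Yc r != 0,
    forall r, S r -> son r != 0 & forall r, S r -> son' r != 0].
  by split=> r /SO /OmegaP[].
have eY := sign_const _ (@Yc_continuous R) Y_neq0.
have eS := sign_const _ son_continuous S_neq0.
have eS' := sign_const _ son'_continuous S'_neq0.
have eI r q : S r -> S q -> (0 < inner_son r) = (0 < inner_son q).
  by move=> Sr Sq; rewrite /inner_son (eY r q) //; case: ifP => _; [exact: eS|exact: eS'].
have eO r q : S r -> S q -> (0 < outer_son r) = (0 < outer_son q).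
  by move=> Sr Sq; rewrite /outer_son (eY r q) //; case: ifP => _; [exact: eS'|exact: eS].
move=> p q Sp Sq; rewrite /label (eY p q) // (eI p q) // (eO p q) //.
have [//|outer_neg] := boolP (0 < outer_son q).
have z_neq0 r : S r -> zc r != 0.
  move=> Sr; apply/eqP => z0.
  by have := outer_son_gt0_z0 (Y_neq0 r Sr) z0; rewrite (eO r q) // (negbTE outer_neg).
by congr sign_label; exact: sign_const (@zc_continuous R) z_neq0 p q Sp Sq.
Qed.

Lemma component_label p : Omega p -> connected_component Omega p = region (label p).
Proof.
move=> Op; apply/seteqP; split=> [q pq|].
  split; first exact: connected_component_sub pq.
  have := label_constant (@component_connected _ Omega p) (@connected_component_sub _ Omega p).
  by apply; [exact: pq|exact: connected_component_refl].
apply: connected_component_max => //; last by case: (connected_region (label_lt12 p)).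
by move=> q [].
Qed.

Lemma components_region : components b1 c = [set region i | i in [set: 'I_12]].
Proof.
apply/seteqP; split=> [_ [p Op <-]|_ [i _ <-]].
  by exists (Ordinal (label_lt12 p)) => //; rewrite component_label.
have [_ [p [Op lp]]] := connected_region (ltn_ord i).
by exists p => //; rewrite component_label // lp.
Qed.

Lemma region_inj i j : (i < 12)%N -> region i = region j -> i = j.
Proof.
move=> i_lt12 eij; have [_ [p [Op lp]]] := connected_region i_lt12.
by have [_ <-] : region j p by rewrite -eij.
Qed.

Lemma card_region_image n (f : 'I_n -> nat) : injective f -> (forall k, (f k < 12)%N) ->
  ([set region (f k) | k in [set: 'I_n]] #= [set: 'I_n])%card.
Proof. by move=> f_inj f_lt12; apply: inj_card_eq => k k' _ _ /(region_inj (f_lt12 k))/f_inj. Qed.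

Lemma components_halfspace e :
  [set K | components b1 c K /\ K `<=` [set p | has_sign e (Yc p)]] =
  [set region (half_offset e + k) | k in [set: 'I_6]].
Proof.
apply/seteqP; split=> [K [[p Op <-{K}] Ksub]|_ [k _ <-]].
  have /has_signP[_ eY] := Ksub p (connected_component_refl Op).
  rewrite component_label //.
  by have [k <-] := half_offsetP (label_lt12 p) (etrans (label_lt6 p) eY); exists k.
split; first by rewrite components_region; exists (Ordinal (half_offset_lt12 e k)).
move=> q [Oq lq]; apply/has_signP; split; first by case/OmegaP: Oq.
by rewrite -label_lt6 lq half_offset_lt6.
Qed.

Lemma card_components : (components b1 c #= [set: 'I_12])%card.
Proof. by rewrite components_region; apply: card_region_image; [exact: val_inj|exact: ltn_ord]. Qed.

Lemma card_components_halfspace e :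
  ([set K | components b1 c K /\ K `<=` [set p | has_sign e (Yc p)]] #= [set: 'I_6])%card.
Proof.
rewrite components_halfspace; apply: card_region_image => [k k' /addnI/val_inj //|k].
exact: half_offset_lt12.
Qed.

Lemma components_reflY K : components b1 c K -> components b1 c (@reflY R @` K).
Proof.
move=> [p Op <-]; have /OmegaP[Y_neq0 _ _] := Op.
rewrite component_label // region_reflY ?label_lt12 // -label_reflY //.
by exists (reflY p); [exact/Omega_reflY|rewrite component_label //; exact/Omega_reflY].
Qed.

End sonic.

Theorem proposition2 (R : realType) (b1 c : R) (hb1 : 1 < b1) (hc : 0 < c) :
  [/\ (components b1 c #= [set: 'I_12])%card,
      ([set K | components b1 c K /\ K `<=` [set p | 0 < Yc p]]
         #= [set: 'I_6])%card,
      ([set K | components b1 c K /\ K `<=` [set p | Yc p < 0]]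
         #= [set: 'I_6])%card &
      forall K, components b1 c K -> components b1 c (@reflY R @` K)].
Proof.
split.
- exact: card_components hb1 hc.
- exact: card_components_halfspace hb1 hc true.
- exact: card_components_halfspace hb1 hc false.
- exact: components_reflY hb1 hc.
Qed.
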